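(* Consider the subsidy game described in the context, and suppose that in period 2 both developers choose openness $\bar\eta$ and the incumbent charges $w_2=w_L$. Define $$\bar{\eta}_{Hg} = \frac{k(\theta+s-w_H)}{2c-k(\theta+s-w_H)},\qquad \bar{\eta}_{Lg} = \frac{k(\theta+s-w_L)}{2c-k(\theta+s-w_L)}.$$ (a) $\bar\eta_{Hg}\le\bar\eta_{Lg}$, and: if the incumbent charges $w_1=w_H$ in period 1, the deployer selects the incumbent in period 2 iff $\eta_1\le\bar\eta_{Hg}$; if it charges $w_1=w_L$, the deployer selects the incumbent in period 2 iff $\eta_1\le\bar\eta_{Lg}$. (b) Conditional on the period-2 outcome, the incumbent's total profit is increasing in $\eta_1$: with $\alpha_1=\frac{(1+\eta_1)(\theta-w_1+s)}{2c}$ and $\alpha_2=\frac{(1+k\alpha_1)(1+\bar\eta)(\theta-w_L+s)}{2c}$, both $w_1\alpha_1+w_L\alpha_2$ and $w_1\alpha_1$ are monotonically increasing in $\eta_1\in[0,\bar\eta]$.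
   Context: Parameters: $\theta>0$, $c>0$, license fees $0\le w_L\le w_H\le\theta/2$, openness cap $\bar\eta>0$, data flywheel parameter $k\ge0$, subsidy $0\le s\le w_L$. Two periods $t\in\{1,2\}$; users choose engagement $\alpha_t$ maximizing $Q_t\alpha_t-\alpha_t^2/2$, so $\alpha_t=Q_t$, where $Q_t$ is the deployer's fine-tuning effort. Period 1: an incumbent developer chooses $w_1\in\{w_H,w_L\}$ and openness $\eta_1\in[0,\bar\eta]$; the deployer chooses $Q_1$ to maximize $(\theta-w_1+s)\alpha_1-\frac{cQ_1^2}{1+\eta_1}$. Period 2: the incumbent chooses $w_2\in\{w_H,w_L\}$ and $\eta_2\in[0,\bar\eta]$; an entrant charges $w_L$ and chooses $\tilde\eta_2\in[0,\bar\eta]$. For each developer the deployer chooses effort optimally: with the incumbent its period-2 profit is $(\theta-w_2+s)Q_2-\frac{cQ_2^2}{(1+k\alpha_1)(1+\eta_2)}$, with the entrant $(\theta-w_L+s)Q_2-\frac{cQ_2^2}{(1+\eta_1)(1+\tilde\eta_2)}$; it selects the incumbent iff the incumbent's optimized profit is at least the entrant's. Developers receive the full fee per unit: incumbent's payoff $w_1\alpha_1+w_2\alpha_2$ if selected in period 2, else $w_1\alpha_1$; entrant's payoff $w_L\alpha_2$ if selected, else $0$. Standing assumption: $k\le\min\Big\{\frac{2c\bar\eta}{(1+\bar\eta)(\theta-w_L+s)},\frac{2c(2\theta+2s-w_H-w_L)(w_H-w_L)}{(\theta-w_H+s)^2(\theta-w_L+s)}\Big\}$. *)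

From HB Require Import structures.
From mathcomp Require Import all_boot all_order all_algebra.
Set Implicit Arguments. Unset Strict Implicit. Unset Printing Implicit Defensive.
Import Order.TTheory GRing.Theory Num.Theory.
Local Open Scope ring_scope.

Section Model.
Variable R : realFieldType.

(* Users' engagement equals the deployer's fine-tuning effort: alpha_t = Q_t. *)

Definition deployer1 (theta c s w1 eta1 Q : R) : R :=
  (theta - w1 + s) * Q - c * Q ^+ 2 / (1 + eta1).

(* Period-2 deployer profit when working with the incumbent
   (alpha1 = period-1 engagement, k = data flywheel). *)
Definition deployer2_inc (theta c s k alpha1 w2 eta2 Q : R) : R :=
  (theta - w2 + s) * Q - c * Q ^+ 2 / ((1 + k * alpha1) * (1 + eta2)).

Definition deployer2_ent (theta c s wL eta1 eta2t Q : R) : R :=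
  (theta - wL + s) * Q - c * Q ^+ 2 / ((1 + eta1) * (1 + eta2t)).

Definition is_maximizer (f : R -> R) (Q : R) : Prop := forall Q', f Q' <= f Q.

(* The deployer selects the incumbent iff its optimized profit with the
   incumbent is at least its optimized profit with the entrant. *)
Definition selects_incumbent (theta c s k wL alpha1 eta1 w2 eta2 eta2t : R) : Prop :=
  exists Q, forall Q',
    deployer2_ent theta c s wL eta1 eta2t Q' <= deployer2_inc theta c s k alpha1 w2 eta2 Q.

Definition eta_g (theta c s k w : R) : R :=
  k * (theta + s - w) / (2 * c - k * (theta + s - w)).

Definition alpha1_of (theta c s w1 eta1 : R) : R :=
  (1 + eta1) * (theta - w1 + s) / (2 * c).
Definition alpha2_of (theta c s k wL etabar w1 eta1 : R) : R :=
  (1 + k * alpha1_of theta c s w1 eta1) * (1 + etabar) * (theta - wL + s) / (2 * c).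

End Model.

(* The deployer's profit in every stage is a concave quadratic
   [b Q - c Q^2 / D], maximized at [Q = D b / (2c)] with value [D b^2 / (4c)],
   which is increasing in the productivity factor [D].  In period 2 both
   developers charge [wL], so the deployer selects the incumbent iff its factor
   [(1 + k alpha1)(1 + etabar)] is at least the entrant's
   [(1 + eta1)(1 + etabar)], i.e. iff [eta1 <= k alpha1], where
   [alpha1 = (1 + eta1)(theta - w1 + s) / (2c)] is the period-1 optimum.  This
   inequality is linear in [eta1] and solves to [eta1 <= a / (1 - a)] with
   [a = k (theta + s - w1) / (2c)], which is [eta_g] and increases with [a].
   Part (b) holds because [alpha1] and [alpha2] are nondecreasing affine
   functions of [eta1]. *)
From HB Require Import structures.
From mathcomp Require Import all_boot all_order all_algebra.
From mathcomp Require Import ring lra.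
Import Order.TTheory GRing.Theory Num.Theory.
Local Open Scope ring_scope.

Section SubsidyGame.
Variable R : realFieldType.

(* [deployer1], [deployer2_inc] and [deployer2_ent] are convertible to
   [quad_profit] with [D] the productivity factor, and [alpha1_of] to
   [quad_argmax]; the proofs below rely on this. *)
Definition quad_profit (b c D Q : R) : R := b * Q - c * Q ^+ 2 / D.
Definition quad_argmax (b c D : R) : R := D * b / (2 * c).
Definition quad_max (b c D : R) : R := D * (b ^+ 2 / (4 * c)).

Definition odds (a : R) : R := a / (1 - a).

Lemma quad_max_sub_profit (b c D Q : R) : 0 < c -> 0 < D ->
  quad_max b c D - quad_profit b c D Q = c / D * (Q - quad_argmax b c D) ^+ 2.
Proof.
move=> c_gt0 D_gt0; rewrite /quad_max /quad_profit /quad_argmax.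
by field; rewrite !lt0r_neq0.
Qed.

Lemma quad_profit_le_max (b c D Q : R) : 0 < c -> 0 < D ->
  quad_profit b c D Q <= quad_max b c D.
Proof.
move=> c_gt0 D_gt0; rewrite -subr_ge0 quad_max_sub_profit //.
by rewrite mulr_ge0 ?sqr_ge0 // divr_ge0 ?ltW.
Qed.

Lemma quad_profit_argmax (b c D : R) : 0 < c -> 0 < D ->
  quad_profit b c D (quad_argmax b c D) = quad_max b c D.
Proof.
move=> c_gt0 D_gt0; apply/eqP; rewrite eq_sym -subr_eq0 quad_max_sub_profit //.
by rewrite subrr expr0n mulr0.
Qed.

Lemma quad_argmax_maximizer (b c D : R) : 0 < c -> 0 < D ->
  is_maximizer (quad_profit b c D) (quad_argmax b c D).
Proof.
by move=> c_gt0 D_gt0 Q; rewrite quad_profit_argmax // quad_profit_le_max.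
Qed.

Lemma quad_maximizer_unique (b c D Q : R) : 0 < c -> 0 < D ->
  is_maximizer (quad_profit b c D) Q -> Q = quad_argmax b c D.
Proof.
move=> c_gt0 D_gt0 /(_ (quad_argmax b c D)); rewrite quad_profit_argmax //.
rewrite -subr_le0 quad_max_sub_profit // pmulr_rle0 ?divr_gt0 // => sq_le0.
by apply/eqP; rewrite -subr_eq0 -sqrf_eq0 eq_le sq_le0 sqr_ge0.
Qed.

Lemma ler_quad_max (b c D1 D2 : R) : 0 < c -> b != 0 ->
  (quad_max b c D1 <= quad_max b c D2) = (D1 <= D2).
Proof.
move=> c_gt0 b_neq0; rewrite ler_pM2r // divr_gt0 ?exprn_even_gt0 //.
by rewrite mulr_gt0.
Qed.

Lemma dominates_iff_max_le (f g : R -> R) (qf qg : R) :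
  is_maximizer f qf -> is_maximizer g qg ->
  (exists Q, forall Q', f Q' <= g Q) <-> f qf <= g qg.
Proof.
move=> f_max g_max; split=> [[Q fQg] | fg]; first exact: le_trans (fQg qf) (g_max Q).
by exists qg => Q'; exact: le_trans (f_max Q') fg.
Qed.

Lemma ler_mul1D_odds (a x : R) : a < 1 -> (x <= a * (1 + x)) = (x <= odds a).
Proof.
move=> a_lt1; rewrite /odds ler_pdivlMr ?subr_gt0 //.
by apply/idP/idP => h; nra.
Qed.

Lemma ler_odds (a b : R) : a <= b -> b < 1 -> odds a <= odds b.
Proof.
move=> ab b_lt1; have a_lt1 : a < 1 by exact: le_lt_trans b_lt1.
by rewrite /odds ler_pdivrMr ?subr_gt0 // mulrAC ler_pdivlMr ?subr_gt0 //; nra.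
Qed.

Lemma eta_g_odds (theta c s k w : R) : 0 < c -> k * (theta - w + s) < 2 * c ->
  eta_g theta c s k w = odds (k * (theta - w + s) / (2 * c)).
Proof.
move=> c_gt0 kX_lt; rewrite /eta_g /odds addrAC.
have D_neq0 : 2 * c - k * (theta - w + s) != 0 by rewrite subr_eq0 gt_eqF.
by field; rewrite D_neq0 lt0r_neq0.
Qed.

Lemma period1_maximizer (theta c s w eta1 Q1 : R) : 0 < c -> 0 <= eta1 ->
  is_maximizer (deployer1 theta c s w eta1) Q1 -> Q1 = alpha1_of theta c s w eta1.
Proof. by move=> c_gt0 eta1_ge0; apply: quad_maximizer_unique => //; lra. Qed.

Lemma selects_incumbent_iff (theta c s k wL alpha1 eta1 eta2 : R) :
  0 < c -> 0 < theta - wL + s -> 0 <= eta1 -> 0 <= eta2 -> 0 <= k * alpha1 ->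
  selects_incumbent theta c s k wL alpha1 eta1 wL eta2 eta2 <-> eta1 <= k * alpha1.
Proof.
move=> c_gt0 X_gt0 eta1_ge0 eta2_ge0 kalpha1_ge0.
have Dent_gt0 : 0 < (1 + eta1) * (1 + eta2) by rewrite mulr_gt0 //; lra.
have Dinc_gt0 : 0 < (1 + k * alpha1) * (1 + eta2) by rewrite mulr_gt0 //; lra.
rewrite /selects_incumbent (dominates_iff_max_le _ _ _ _
  (quad_argmax_maximizer _ _ _ c_gt0 Dent_gt0) (quad_argmax_maximizer _ _ _ c_gt0 Dinc_gt0)).
rewrite !quad_profit_argmax //.
rewrite ler_quad_max ?lt0r_neq0 // ler_pM2r; last lra.
by rewrite lerD2l.
Qed.

Lemma selects_incumbent_iff_le_eta_g (theta c s k wL w eta1 etabar Q1 : R) :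
  0 < c -> 0 < theta - wL + s -> 0 <= theta - w + s -> 0 <= k ->
  k * (theta - w + s) < 2 * c -> 0 <= eta1 -> 0 <= etabar ->
  is_maximizer (deployer1 theta c s w eta1) Q1 ->
  selects_incumbent theta c s k wL Q1 eta1 wL etabar etabar
    <-> eta1 <= eta_g theta c s k w.
Proof.
move=> c_gt0 XL_gt0 X_ge0 k_ge0 kX_lt eta1_ge0 etabar_ge0 /period1_maximizer.
move=> /(_ c_gt0 eta1_ge0) ->.
have kalpha1E : k * alpha1_of theta c s w eta1
    = k * (theta - w + s) / (2 * c) * (1 + eta1) by rewrite /alpha1_of; ring.
have kalpha1_ge0 : 0 <= k * alpha1_of theta c s w eta1.
  by rewrite kalpha1E !mulr_ge0 ?invr_ge0 //; lra.
rewrite selects_incumbent_iff // eta_g_odds // -ler_mul1D_odds ?kalpha1E //.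
by rewrite ltr_pdivrMr ?mulr_gt0 // mul1r.
Qed.

Lemma alpha1_of_le (theta c s w1 e e' : R) : 0 < c -> 0 <= theta - w1 + s ->
  e <= e' -> alpha1_of theta c s w1 e <= alpha1_of theta c s w1 e'.
Proof.
move=> c_gt0 X_ge0 ee'; rewrite /alpha1_of ler_wpM2r ?invr_ge0 ?ler_wpM2r //; lra.
Qed.

Lemma alpha2_of_le (theta c s k wL etabar w1 e e' : R) :
  0 < c -> 0 <= theta - w1 + s -> 0 <= theta - wL + s -> 0 <= k -> 0 <= etabar ->
  e <= e' -> alpha2_of theta c s k wL etabar w1 e <= alpha2_of theta c s k wL etabar w1 e'.
Proof.
move=> c_gt0 X1_ge0 XL_ge0 k_ge0 etabar_ge0 ee'; rewrite /alpha2_of.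
rewrite ler_wpM2r ?invr_ge0 ?ler_wpM2r ?lerD2l ?ler_wpM2l ?alpha1_of_le //; lra.
Qed.

End SubsidyGame.

Theorem mainTheorem7 (R : realFieldType) (theta c wL wH etabar k s : R) :
  0 < theta -> 0 < c -> 0 <= wL -> wL <= wH -> wH <= theta / 2 ->
  0 < etabar -> 0 <= k -> 0 <= s -> s <= wL ->
  k <= 2 * c * etabar / ((1 + etabar) * (theta - wL + s)) ->
  k <= 2 * c * (2 * theta + 2 * s - wH - wL) * (wH - wL)
         / ((theta - wH + s) ^+ 2 * (theta - wL + s)) ->
  (* (a) *)
  eta_g theta c s k wH <= eta_g theta c s k wL /\
  (forall eta1 Q1, 0 <= eta1 <= etabar ->
     is_maximizer (deployer1 theta c s wH eta1) Q1 ->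
     (selects_incumbent theta c s k wL Q1 eta1 wL etabar etabar
        <-> eta1 <= eta_g theta c s k wH)) /\
  (forall eta1 Q1, 0 <= eta1 <= etabar ->
     is_maximizer (deployer1 theta c s wL eta1) Q1 ->
     (selects_incumbent theta c s k wL Q1 eta1 wL etabar etabar
        <-> eta1 <= eta_g theta c s k wL)) /\
  (* (b) *)
  (forall w1, (w1 = wH \/ w1 = wL) ->
   forall e e', 0 <= e -> e <= e' -> e' <= etabar ->
     w1 * alpha1_of theta c s w1 e + wL * alpha2_of theta c s k wL etabar w1 e
       <= w1 * alpha1_of theta c s w1 e' + wL * alpha2_of theta c s k wL etabar w1 e' /\
     w1 * alpha1_of theta c s w1 e <= w1 * alpha1_of theta c s w1 e').
Proof.
move=> theta_gt0 c_gt0 wL_ge0 wLH wH_le etabar_gt0 k_ge0 s_ge0 s_le k_le _.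
have XL_gt0 : 0 < theta - wL + s by lra.
have XH_gt0 : 0 < theta - wH + s by lra.
have kXL_le : k * ((1 + etabar) * (theta - wL + s)) <= 2 * c * etabar.
  by rewrite -ler_pdivlMr // mulr_gt0 //; lra.
have kXL_lt : k * (theta - wL + s) < 2 * c by nra.
have kXHL : k * (theta - wH + s) <= k * (theta - wL + s) by rewrite ler_wpM2l //; lra.
have kXH_lt : k * (theta - wH + s) < 2 * c by lra.
split; [|split; [|split]].
- rewrite !eta_g_odds //; apply: ler_odds.
    by rewrite ler_wpM2r // invr_ge0 mulr_ge0 // ltW.
  by rewrite ltr_pdivrMr ?mulr_gt0 // mul1r.
- by move=> eta1 Q1 /andP[eta1_ge0 _]; apply: selects_incumbent_iff_le_eta_g => //; lra.
- by move=> eta1 Q1 /andP[eta1_ge0 _]; apply: selects_incumbent_iff_le_eta_g => //; lra.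
move=> w1 w1E e e' _ ee' _.
have [w1_ge0 X1_ge0] : 0 <= w1 /\ 0 <= theta - w1 + s by case: w1E => ->; lra.
have alpha1_le : w1 * alpha1_of theta c s w1 e <= w1 * alpha1_of theta c s w1 e'.
  by rewrite ler_wpM2l ?alpha1_of_le.
split=> //; apply: lerD alpha1_le _; rewrite ler_wpM2l ?alpha2_of_le //; lra.
Qed.
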